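(* Let $G$ be a topological group, $m\in\mathbb N\cup\{\infty\}$, $\rho\colon G\to\mathrm{Isom}(\mathbf H^m_{\mathbb C})_o$ a representation and $x\in\mathbf H^m_{\mathbb C}$. Let $\alpha(g_1,g_2,g_3)=\mathrm{Cart}(\rho(g_1)x,\rho(g_2)x,\rho(g_3)x)$. If $\rho(G)$ fixes a point $y\in\partial\mathbf H^m_{\mathbb C}$, then there exists an alternating $G$-invariant $1$-cochain $\omega\colon G^2\to\mathbb R$ such that $\partial\omega=\alpha$.
   Context: $\mathbf H^m_{\mathbb C}$ is the projectivization of the positive vectors of a separable complex Hilbert space with a strongly non-degenerate Hermitian form $B$ of signature $(1,m)$ (linear in the first variable), with $\cosh d([v],[w])=|B(v,w)|/\sqrt{B(v,v)B(w,w)}$; its boundary is the set of isotropic lines; $\mathrm{Isom}(\mathbf H^m_{\mathbb C})_o=PU(1,m)$. A representation is an orbitally continuous homomorphism. The Cartan argument is $\mathrm{Cart}(x,y,z)=\arg\big(B(\tilde x,\tilde y)B(\tilde y,\tilde z)B(\tilde z,\tilde x)\big)$ for any lifts (defined also when some points are on the boundary, using isotropic lifts). A $1$-cochain $\omega$ is alternating if $\omega(l,g)=-\omega(g,l)$ and $G$-invariant if $\omega(hg,hl)=\omega(g,l)$; $\partial\omega(g,l,k)=\omega(l,k)-\omega(g,k)+\omega(g,l)$. *)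

From HB Require Import structures.
From mathcomp Require Import all_boot all_order all_algebra.
From mathcomp Require Import all_classical all_reals all_analysis.
From mathcomp Require Import complex.
Set Implicit Arguments. Unset Strict Implicit. Unset Printing Implicit Defensive.
Import Order.TTheory GRing.Theory Num.Theory.
Import numFieldNormedType.Exports.
Local Open Scope ring_scope.
Local Open Scope complex_scope.
Local Open Scope classical_set_scope.

Section Defs.
Context {R : realType}.

Definition cre (z : R[i]) : R := complex.Re z.
Definition cim (z : R[i]) : R := complex.Im z.
Definition cnorm2 (z : R[i]) : R := cre z ^+ 2 + cim z ^+ 2.
Definition cabs (z : R[i]) : R := Num.sqrt (cnorm2 z).

(* argument of a complex number, with values in (-pi, pi]  (atan2 convention; arg 0 = 0) *)
Definition carg (z : R[i]) : R :=
  let a := cre z in let b := cim z in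
  if 0 < a then atan (b / a)
  else if a < 0 then (if 0 <= b then atan (b / a) + pi else atan (b / a) - pi)
  else if 0 < b then pi / 2
  else if b < 0 then - (pi / 2)
  else 0.

Definition csum (u : nat -> R[i]) : R[i] :=
  Complex (limn (@series R (fun k => cre (u k)))) (limn (@series R (fun k => cim (u k)))).

(* The model of the Hilbert space: m = Some n means dimension n+1 (i.e. C^{1+n}),
   m = None means m = infinity, i.e. l^2(N) over C.  Vectors are sequences nat -> C. *)
Definition in_model (m : option nat) (v : nat -> R[i]) : Prop :=
  (forall n, m = Some n -> forall i, (n < i)%N -> v i = 0) /\
  cvgn (@series R (fun i => cnorm2 (v i))).

(* The Hermitian form of signature (1,m), linear in the first variable:
   B(v,w) = v_0 conj(w_0) - sum_{i>=1} v_i conj(w_i). *)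
Definition Bform (v w : nat -> R[i]) : R[i] :=
  v 0%N * (w 0%N)^* - csum (fun i => v i.+1 * (w i.+1)^*).

(* points of H^m_C (lifts): positive vectors *)
Definition in_Hm (m : option nat) (v : nat -> R[i]) : Prop :=
  in_model m v /\ 0 < cre (Bform v v).

(* points of the boundary (lifts): nonzero isotropic vectors *)
Definition in_boundary (m : option nat) (v : nat -> R[i]) : Prop :=
  in_model m v /\ (exists i, v i != 0) /\ Bform v v = 0.

(* hyperbolic distance between the lines [v], [w]:
   cosh d = |B(v,w)| / sqrt(B(v,v) B(w,w)),  acosh c = ln (c + sqrt (c^2 - 1)). *)
Definition acoshR (c : R) : R := ln (c + Num.sqrt (c ^+ 2 - 1)).
Definition hdist (v w : nat -> R[i]) : R :=
  acoshR (cabs (Bform v w) / Num.sqrt (cre (Bform v v) * cre (Bform w w))).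

Definition Cart (a b c : nat -> R[i]) : R :=
  carg (Bform a b * Bform b c * Bform c a).

Definition in_U1m (m : option nat) (T : (nat -> R[i]) -> (nat -> R[i])) : Prop :=
  (forall v, in_model m v -> in_model m (T v)) /\
  (forall (a : R[i]) v w, in_model m v -> in_model m w ->
      forall i, T (fun j => a * v j + w j) i = a * T v i + T w i) /\
  (forall v w, in_model m v -> in_model m w -> Bform (T v) (T w) = Bform v w) /\
  (forall v w, in_model m v -> in_model m w ->
      (forall i, T v i = T w i) -> forall i, v i = w i) /\
  (forall w, in_model m w -> exists2 v, in_model m v & forall i, T v i = w i).

End Defs.

Definition is_topological_group (G : topologicalType)
    (mul : G -> G -> G) (inv : G -> G) (one : G) : Prop :=
  (forall a b c, mul a (mul b c) = mul (mul a b) c) /\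
  (forall a, mul one a = a) /\ (forall a, mul a one = a) /\
  (forall a, mul (inv a) a = one) /\ (forall a, mul a (inv a) = one) /\
  continuous (fun p : G * G => mul p.1 p.2) /\ continuous inv.

(* A representation rho : G -> Isom(H^m_C)_o = PU(1,m), given through lifts
   rho g in U(1,m):  each rho g is in U(1,m); g |-> [rho g] is a homomorphism to
   PU(1,m) = U(1,m)/U(1), i.e. rho (g h) = lambda * rho g o rho h with |lambda| = 1;
   and rho is orbitally continuous: g |-> rho(g)[x] is continuous into (H^m_C, d)
   for every x in H^m_C. *)
Definition is_representation {R : realType} (G : topologicalType)
    (mul : G -> G -> G) (m : option nat)
    (rho : G -> (nat -> R[i]) -> (nat -> R[i])) : Prop :=
  (forall g, in_U1m m (rho g)) /\
  (forall g h, exists2 lam : R[i], cnorm2 lam = 1 &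
      forall v, in_model m v -> forall i, rho (mul g h) v i = lam * rho g (rho h v) i) /\
  (forall x, in_Hm m x -> forall g0 : G,
      (fun g => hdist (rho g x) (rho g0 x)) @ g0 --> (0 : R)).

Definition fixes_point {R : realType} (T : (nat -> R[i]) -> (nat -> R[i]))
    (y : nat -> R[i]) : Prop :=
  exists lam : R[i], forall i, T y i = lam * y i.

(* Write [B] for the form, [y] for the fixed isotropic vector and
   [T(u,v,w) = B(u,v) B(v,w) B(w,u)], so that [Cart(u,v,w) = arg T(u,v,w)].  Since [B]
   has signature (1,m), it is negative definite on the orthogonal complement of any
   positive vector [p]; this gives the reverse Cauchy-Schwarz inequality
   [B(p,p) B(v,v) <= |B(v,p)|^2] and a Gram inequality for three vectors, from which
   [T(p,v,w)] has positive real part whenever [p], [v] are positive and [w] is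
   positive or nonzero isotropic.  All the Cartan arguments below thus lie in
   (-pi/2, pi/2), so the multiplicative identity
     [T(u,v,y) T(v,w,y) T(w,u,y) = |B(y,u) B(y,v) B(y,w)|^2 T(u,v,w)]
   becomes the additive relation
     [Cart(u,v,y) + Cart(v,w,y) + Cart(w,u,y) = Cart(u,v,w)].
   Hence [omega(g,l) = Cart(rho(g)x, rho(l)x, y)] has coboundary [alpha].  It is
   alternating because swapping two points conjugates [T], and invariant because
   [rho(h)] preserves [B] and rescales [y], while unit scalars and the rescaling of
   [y] multiply [T] by a positive real. *)

From HB Require Import structures.
From mathcomp Require Import all_boot all_order all_algebra.
From mathcomp Require Import all_classical all_reals all_analysis.
From mathcomp Require Import complex.
From mathcomp Require Import ring lra.
Import Order.TTheory GRing.Theory Num.Theory.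
Import numFieldNormedType.Exports.
Set Implicit Arguments. Unset Strict Implicit. Unset Printing Implicit Defensive.
Local Open Scope ring_scope.
Local Open Scope complex_scope.

Section ComplexParts.
Context {R : realType}.
Implicit Types (z w a b : R[i]) (r : R).

Lemma complex_ext z w : cre z = cre w -> cim z = cim w -> z = w.
Proof. by case: z w => [x y] [u v] /= -> ->. Qed.

Lemma creD z w : cre (z + w) = cre z + cre w. Proof. by case: z w => [x y] [u v]. Qed.
Lemma cimD z w : cim (z + w) = cim z + cim w. Proof. by case: z w => [x y] [u v]. Qed.
Lemma creM z w : cre (z * w) = cre z * cre w - cim z * cim w.
Proof. by case: z w => [x y] [u v]. Qed.
Lemma cimM z w : cim (z * w) = cre z * cim w + cim z * cre w.
Proof. by case: z w => [x y] [u v]. Qed.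
Lemma creJ z : cre z^* = cre z. Proof. by case: z. Qed.
Lemma cimJ z : cim z^* = - cim z. Proof. by case: z. Qed.
Lemma creN z : cre (- z) = - cre z. Proof. by case: z. Qed.
Lemma creR r : cre r%:C = r. Proof. by []. Qed.
Lemma cimR r : cim r%:C = 0. Proof. by []. Qed.

Lemma creMR r z : cre (r%:C * z) = r * cre z.
Proof. by rewrite creM creR cimR mul0r subr0. Qed.

Lemma cimMR r z : cim (r%:C * z) = r * cim z.
Proof. by rewrite cimM creR cimR mul0r addr0. Qed.

(* Inside a product [^*] is parsed in ring_scope as [Num.conj]; [%C] selects [conjc]. *)
Lemma mulcJ z : z * z^*%C = (cnorm2 z)%:C.
Proof. by apply: complex_ext; rewrite ?creM ?cimM creJ cimJ /cnorm2 /=; ring. Qed.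

Lemma cnorm2M z w : cnorm2 (z * w) = cnorm2 z * cnorm2 w.
Proof. by rewrite /cnorm2 creM cimM; ring. Qed.

Lemma cnorm2J z : cnorm2 z^* = cnorm2 z.
Proof. by rewrite /cnorm2 creJ cimJ sqrrN. Qed.

Lemma cnorm2N z : cnorm2 (- z) = cnorm2 z.
Proof. by case: z => x y; rewrite /cnorm2 /= !sqrrN. Qed.

Lemma cnorm2R r : cnorm2 r%:C = r ^+ 2.
Proof. by rewrite /cnorm2 creR cimR expr0n addr0. Qed.

Lemma cnorm2_ge0 z : 0 <= cnorm2 z.
Proof. by rewrite addr_ge0 ?sqr_ge0. Qed.

Lemma cnorm2_eq0 z : cnorm2 z = 0 -> z = 0.
Proof.
move=> /eqP; rewrite paddr_eq0 ?sqr_ge0 // !sqrf_eq0 => /andP[/eqP re0 /eqP im0].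
by apply: complex_ext; rewrite ?re0 ?im0.
Qed.

Lemma cnorm2_gt0 z : z != 0 -> 0 < cnorm2 z.
Proof.
move=> nz; rewrite lt_neqAle cnorm2_ge0 andbT eq_sym.
by apply: contra nz => /eqP /cnorm2_eq0 ->.
Qed.

Lemma cre_sqr_le z : cre z ^+ 2 <= cnorm2 z.
Proof. by rewrite lerDl sqr_ge0. Qed.

Lemma cnorm2_lin_le a b z w :
  cnorm2 (a * z + b * w) <= 2 * cnorm2 a * cnorm2 z + 2 * cnorm2 b * cnorm2 w.
Proof.
rewrite -!mulrA -!cnorm2M /cnorm2 creD cimD.
have := sqr_ge0 (cre (a * z) - cre (b * w)); have := sqr_ge0 (cim (a * z) - cim (b * w)).
rewrite !expr2; nra.
Qed.

Lemma norm_creMJ_le z w : `|cre (z * w^*)| <= cnorm2 z + cnorm2 w.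
Proof.
rewrite creM creJ cimJ /cnorm2 ler_norml; apply/andP; split.
  by have := sqr_ge0 (cre z + cre w); have := sqr_ge0 (cim z + cim w); rewrite !expr2; nra.
by have := sqr_ge0 (cre z - cre w); have := sqr_ge0 (cim z - cim w); rewrite !expr2; nra.
Qed.

Lemma norm_cimMJ_le z w : `|cim (z * w^*)| <= cnorm2 z + cnorm2 w.
Proof.
rewrite cimM creJ cimJ /cnorm2 ler_norml; apply/andP; split.
  by have := sqr_ge0 (cim z + cre w); have := sqr_ge0 (cre z - cim w); rewrite !expr2; nra.
by have := sqr_ge0 (cim z - cre w); have := sqr_ge0 (cre z + cim w); rewrite !expr2; nra.
Qed.

End ComplexParts.

Section Argument.
Context {R : realType}.
Implicit Types (z w : R[i]) (r s t : R).

Definition expi t : R[i] := cos t +i* sin t.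

Lemma expiD s t : expi (s + t) = expi s * expi t.
Proof. by apply: complex_ext; rewrite ?creM ?cimM /= ?cosD ?sinD // addrC. Qed.

Lemma cnorm2_expi t : cnorm2 (expi t) = 1.
Proof. exact: cos2Dsin2. Qed.

Lemma cargE z : 0 < cre z -> carg z = atan (cim z / cre z).
Proof. by rewrite /carg => ->. Qed.

Lemma carg_bound z : 0 < cre z -> - (pi / 2) < carg z < pi / 2.
Proof. by move=> z_gt0; rewrite cargE // atan_gtNpi2 atan_ltpi2. Qed.

Lemma carg_conj z : 0 < cre z -> carg z^* = - carg z.
Proof. by move=> z_gt0; rewrite !cargE ?creJ // cimJ mulNr atanN. Qed.

Lemma carg_scale r z : 0 < r -> 0 < cre z -> carg (r%:C * z) = carg z.
Proof.
move=> r_gt0 z_gt0.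
rewrite !cargE ?creMR ?mulr_gt0 // cimMR; congr atan.
by rewrite invfM mulrACA divff ?gt_eqF // mul1r.
Qed.

Lemma polar z : 0 < cre z -> z = (cabs z)%:C * expi (carg z).
Proof.
move=> z_gt0; rewrite cargE //; set t := cim z / cre z.
have imE : cim z = t * cre z by rewrite /t mulfVK // gt_eqF.
have sq_gt0 : 0 < Num.sqrt (1 + t ^+ 2) by rewrite sqrtr_gt0; have := sqr_ge0 t; lra.
have cabsE : cabs z = cre z * Num.sqrt (1 + t ^+ 2).
  rewrite /cabs /cnorm2 imE.
  have -> : cre z ^+ 2 + (t * cre z) ^+ 2 = cre z ^+ 2 * (1 + t ^+ 2) by ring.
  by rewrite sqrtrM ?sqr_ge0 // sqrtr_sqr gtr0_norm.
have cosE : cos (atan t) = (Num.sqrt (1 + t ^+ 2))^-1 by rewrite cos_atan.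
have sinE : sin (atan t) = t * (Num.sqrt (1 + t ^+ 2))^-1.
  have := atanK t; rewrite /tan => tanE.
  by rewrite -cosE -[X in _ = X * _]tanE divfK // cosE invr_eq0 (gt_eqF sq_gt0).
apply: complex_ext; rewrite ?creM ?cimM creR cimR /= cosE sinE cabsE ?imE;
  field; exact: lt0r_neq0.
Qed.

Lemma sin_eq0_lt_pi t : `|t| < pi -> sin t = 0 -> t = 0.
Proof.
move=> t_lt sin0; case: (ltgtP t 0) => // t_neq; move: t_lt.
- rewrite ltr0_norm // => Nt_lt.
  have := @sin_gt0_pi R (- t); rewrite sinN sin0 oppr0 ltxx oppr_gt0 t_neq Nt_lt.
  by move=> /(_ isT).
- rewrite gtr0_norm // => t_lt.
  by have := @sin_gt0_pi R t; rewrite sin0 ltxx t_neq t_lt => /(_ isT).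
Qed.

Lemma expi_inj s t : `|s - t| < pi *+ 2 -> expi s = expi t -> s = t.
Proof.
move=> st_lt [cos_st sin_st]; apply/eqP; rewrite -subr_eq0; apply/eqP.
set d := s - t in st_lt *.
have cos_d : cos d = 1 by rewrite cosB cos_st sin_st -!expr2 cos2Dsin2.
have sin_half : sin (d / 2) = 0.
  have := cos2Dsin2 (d / 2); move: cos_d.
  rewrite -[d in cos d](divfK (x := 2)) ?pnatr_eq0 // mulr_natr cos_mulr2n mulr2n.
  by move=> h1 h2; apply/eqP; rewrite -sqrf_eq0; apply/eqP; lra.
apply: (mulIf (x := 2^-1)); rewrite ?invr_eq0 ?pnatr_eq0 // mul0r.
apply: sin_eq0_lt_pi sin_half.
by rewrite normrM normfV normr_nat ltr_pdivrMr // mulr_natr.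
Qed.

Lemma carg_mul3 z1 z2 z3 w r : 0 < cre z1 -> 0 < cre z2 -> 0 < cre z3 -> 0 < cre w ->
  0 < r -> z1 * z2 * z3 = r%:C * w -> carg z1 + carg z2 + carg z3 = carg w.
Proof.
move=> z1_gt0 z2_gt0 z3_gt0 w_gt0 r_gt0 E.
set K := cabs z1 * cabs z2 * cabs z3; set L := r * cabs w.
have cabs_gt0 z : 0 < cre z -> 0 < cabs z.
  by move=> z_gt0; rewrite sqrtr_gt0 (lt_le_trans _ (cre_sqr_le z)) ?exprn_gt0.
have K_gt0 : 0 < K by rewrite !mulr_gt0 ?cabs_gt0.
have L_gt0 : 0 < L by rewrite mulr_gt0 ?cabs_gt0.
have polarE : K%:C * expi (carg z1 + carg z2 + carg z3) = L%:C * expi (carg w).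
  rewrite [in RHS]rmorphM -mulrA -(polar w_gt0) -E.
  rewrite [X in _ = X * _ * _](polar z1_gt0) [X in _ = _ * X * _](polar z2_gt0).
  by rewrite [X in _ = _ * X](polar z3_gt0) !expiD !rmorphM; ring.
have KL : K = L.
  have := congr1 cnorm2 polarE; rewrite !cnorm2M !cnorm2_expi !mulr1 !cnorm2R.
  by move/eqP; rewrite eqf_sqr => /orP[/eqP //|/eqP KE]; move: K_gt0 L_gt0; lra.
apply: expi_inj; last by apply: (mulfI (x := K%:C)); rewrite ?polarE ?KL // fmorph_eq0 gt_eqF.
have [/andP[? ?] /andP[? ?]] := (carg_bound z1_gt0, carg_bound z2_gt0).
have [/andP[? ?] /andP[? ?]] := (carg_bound z3_gt0, carg_bound w_gt0).
have := @pi_gt0 R; rewrite ltr_norml mulr2n; lra.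
Qed.

End Argument.

Section RealSeries.
Context {R : realType}.
Implicit Types u : R^nat.

Lemma series0 : series (0 : R^nat) = 0.
Proof. by apply/funext => n; rewrite seriesEnat /= big1. Qed.

Lemma is_cvg_series_tail u : cvgn (series u) -> cvgn (series (fun i => u i.+1)).
Proof.
move=> cu; have tailE : series (fun i => u i.+1) = (fun n => series u n.+1) - cst (u 0%N).
  apply/funext => n; change (series (fun i => u i.+1) n = series u n.+1 - u 0%N).
  by rewrite !seriesEnat /= big_nat_recl // addrC addKr.
rewrite tailE; apply: is_cvgB; last exact: is_cvg_cst.
by apply/cvg_ex; exists (limn (series u)); rewrite (cvg_shiftS (series u)).
Qed.

Lemma series_le_lim u : cvgn (series u) -> (forall i, 0 <= u i) ->
  forall n, series u n <= limn (series u).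
Proof.
move=> cu u_ge0; apply: nondecreasing_cvgn_le cu.
by apply/nondecreasing_seqP => n; rewrite seriesSr lerDl.
Qed.

Lemma lim_series_ge0 u : cvgn (series u) -> (forall i, 0 <= u i) -> 0 <= limn (series u).
Proof.
by move=> cu u_ge0; have := series_le_lim cu u_ge0 0; rewrite seriesEnat /= big_geq.
Qed.

Lemma lim_series_eq0 u : cvgn (series u) -> (forall i, 0 <= u i) ->
  limn (series u) = 0 -> forall i, u i = 0.
Proof.
move=> cu u_ge0 lim0 i; apply/eqP; rewrite eq_le u_ge0 andbT.
have := series_le_lim cu u_ge0 i.+1; rewrite lim0 seriesSr.
by apply: le_trans; rewrite lerDr seriesEnat sumr_ge0.
Qed.

Lemma is_cvg_series_le_norm (u c : R^nat) : (forall i, `|u i| <= c i) -> cvgn (series c) ->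
  cvgn (series u).
Proof.
move=> u_le cc; apply: normed_cvg; apply: (series_le_cvg _ _ u_le cc) => i.
  exact: normr_ge0.
exact: le_trans (normr_ge0 _) (u_le i).
Qed.

End RealSeries.

Section ComplexSeries.
Context {R : realType}.
Implicit Types (f g : nat -> R[i]) (a b : R[i]).

Definition csummable f :=
  cvgn (series (fun i => cre (f i))) /\ cvgn (series (fun i => cim (f i))).

Let is_cvg_series_lin (p q : R) (u v : R^nat) : cvgn (series u) -> cvgn (series v) ->
  cvgn (series (p *: u + q *: v)).
Proof. by move=> cu cv; apply: is_cvg_seriesD; exact: is_cvg_seriesZ. Qed.

Let lim_series_lin (p q : R) (u v : R^nat) : cvgn (series u) -> cvgn (series v) ->
  limn (series (p *: u + q *: v)) = p * limn (series u) + q * limn (series v).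
Proof.
move=> cu cv; have [cpu cqv] := (is_cvg_seriesZ (k := p) cu, is_cvg_seriesZ (k := q) cv).
by rewrite lim_seriesD // !lim_seriesZ.
Qed.

Let parts_add f g :
  (fun i => cre (f i + g i)) = (cre \o f) + (cre \o g) /\
  (fun i => cim (f i + g i)) = (cim \o f) + (cim \o g).
Proof. by split; apply/funext => i /=; rewrite ?creD ?cimD. Qed.

Let parts_scale a f :
  (fun i => cre (a * f i)) = cre a *: (cre \o f) + (- cim a) *: (cim \o f) /\
  (fun i => cim (a * f i)) = cre a *: (cim \o f) + cim a *: (cre \o f).
Proof. by split; apply/funext => i /=; rewrite ?creM ?cimM -?mulNr. Qed.

Lemma csummableZ a f : csummable f -> csummable (fun i => a * f i).
Proof.
move=> [fr fi]; have [reE imE] := parts_scale a f.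
by rewrite /csummable /= reE imE; split; apply: is_cvg_series_lin.
Qed.

Lemma csumD f g : csummable f -> csummable g -> csum (fun i => f i + g i) = csum f + csum g.
Proof.
move=> [fr fi] [gr gi]; have [reE imE] := parts_add f g.
by rewrite /csum /= reE imE !lim_seriesD.
Qed.

Lemma csumZ a f : csummable f -> csum (fun i => a * f i) = a * csum f.
Proof.
move=> [fr fi]; have [reE imE] := parts_scale a f.
rewrite /csum /= reE imE !lim_series_lin //.
by apply: complex_ext; rewrite ?creM ?cimM /=; ring.
Qed.

Lemma csum_lin a b f g : csummable f -> csummable g ->
  csum (fun i => a * f i + b * g i) = a * csum f + b * csum g.
Proof.
move=> cf cg; rewrite (csumD (csummableZ a cf) (csummableZ b cg)).
by rewrite !csumZ.
Qed.

Lemma csum_conj f : csummable f -> csum (fun i => (f i)^*) = (csum f)^*.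
Proof.
move=> [_ fi].
have reE : (fun i => cre (f i)^*) = cre \o f by apply/funext => i; rewrite /= creJ.
have imE : (fun i => cim (f i)^*) = - (cim \o f) by apply/funext => i; rewrite /= cimJ.
by rewrite /csum /= reE imE lim_seriesN.
Qed.

Lemma csum_real (u : R^nat) : csum (fun i => (u i)%:C) = (limn (series u))%:C.
Proof.
by rewrite /csum -[fun k => cim _]/(0 : R^nat) series0 lim_cst.
Qed.

End ComplexSeries.

Section CauchySchwarz.
Context {R : realType}.

Lemma quadratic_ge0_le (a c N : R) : 0 <= N -> 0 <= c ->
  (forall l, 0 <= a - 2 * l * N + l ^+ 2 * N * c) -> N <= a * c.
Proof.
move=> N_ge0 c_ge0 quad_ge0; case: (ltgtP c 0) => [|c_gt0|c0]; first lra.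
  have := quad_ge0 c^-1.
  have -> : a - 2 * c^-1 * N + c^-1 ^+ 2 * N * c = (a * c - N) / c.
    by field; rewrite gt_eqF.
  by rewrite pmulr_lge0 ?invr_gt0 // subr_ge0.
rewrite c0 mulr0; case: (ltgtP N 0) => [|N_gt0|//]; first lra.
have := quad_ge0 ((a + 1) / (2 * N)).
have -> : a - 2 * ((a + 1) / (2 * N)) * N + ((a + 1) / (2 * N)) ^+ 2 * N * c = -1.
  by rewrite c0; field; rewrite gt_eqF.
lra.
Qed.

Variables (D : (nat -> R[i]) -> Prop) (F : (nat -> R[i]) -> (nat -> R[i]) -> R[i]).
Hypothesis D_lin : forall a b v w, D v -> D w -> D (fun j => a * v j + b * w j).
Hypothesis F_linl : forall a b v w u, D v -> D w -> D u ->
  F (fun j => a * v j + b * w j) u = a * F v u + b * F w u.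
Hypothesis F_conj : forall v w, D v -> D w -> F w v = (F v w)^*.
Hypothesis F_ge0 : forall u, D u -> 0 <= cre (F u u).

Lemma hermitian_real v : D v -> F v v = (cre (F v v))%:C.
Proof.
move=> Dv; apply: complex_ext => //; rewrite cimR.
by have := congr1 cim (F_conj Dv Dv); rewrite cimJ; lra.
Qed.

Lemma hermitian_CS v w : D v -> D w -> cnorm2 (F v w) <= cre (F v v) * cre (F w w).
Proof.
move=> Dv Dw; apply: quadratic_ge0_le; [exact: cnorm2_ge0 | exact: F_ge0 |] => l.
have Du := D_lin 1 (- (l%:C * F v w)) Dv Dw.
have := F_ge0 Du; rewrite F_linl // (F_conj Du Dv) (F_conj Du Dw) !F_linl //.
rewrite (F_conj Dv Dw) (hermitian_real Dv) (hermitian_real Dw).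
by move: (F v w) (cre (F v v)) (cre (F w w)) => [x y] A C; rewrite /cnorm2 /cre /=; lra.
Qed.

End CauchySchwarz.

Section HermitianForm.
Context {R : realType} (m : option nat).
Local Notation M := (in_model m).
Implicit Types (u v w p : nat -> R[i]) (a b : R[i]).

Lemma in_model_lin a b v w : M v -> M w -> M (fun j => a * v j + b * w j).
Proof.
move=> [v_fin v_cvg] [w_fin w_cvg]; split.
  by move=> n mn i ni; rewrite (v_fin n mn i ni) (w_fin n mn i ni) !mulr0 addr0.
apply: (series_le_cvg (v_ := (2 * cnorm2 a) *: (fun i => cnorm2 (v i)) +
                             (2 * cnorm2 b) *: (fun i => cnorm2 (w i)))) => [i|i|i|].
- exact: cnorm2_ge0.
- by rewrite /= addr_ge0 // !mulr_ge0 // cnorm2_ge0.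
- exact: cnorm2_lin_le.
- by apply: is_cvg_seriesD; exact: is_cvg_seriesZ.
Qed.

Let scale_as_lin a v : (fun j => a * v j + 0 * v j) = (fun j => a * v j).
Proof. by apply/funext => j; rewrite mul0r addr0. Qed.

Lemma in_model_scale a v : M v -> M (fun j => a * v j).
Proof. by move=> Mv; rewrite -scale_as_lin; exact: in_model_lin. Qed.

Definition tail_form v w := csum (fun i => v i.+1 * (w i.+1)^*).

Definition tail_sqnorm v := limn (series (fun i => cnorm2 (v i.+1))).

Lemma BformE v w : Bform v w = v 0%N * (w 0%N)^* - tail_form v w.
Proof. by []. Qed.

Lemma csummable_tail v w : M v -> M w -> csummable (fun i => v i.+1 * (w i.+1)^*).
Proof.
move=> [_ v_cvg] [_ w_cvg].
have tail_cvg := is_cvg_seriesD (is_cvg_series_tail v_cvg) (is_cvg_series_tail w_cvg).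
by split; apply: is_cvg_series_le_norm tail_cvg => i; [exact: norm_creMJ_le | exact: norm_cimMJ_le].
Qed.

Lemma tail_form_linl a b v w u : M v -> M w -> M u ->
  tail_form (fun j => a * v j + b * w j) u = a * tail_form v u + b * tail_form w u.
Proof.
move=> Mv Mw Mu; have [cvu cwu] := (csummable_tail Mv Mu, csummable_tail Mw Mu).
rewrite /tail_form -csum_lin //.
by congr csum; apply/funext => i; rewrite mulrDl !mulrA.
Qed.

Lemma tail_form_conj v w : M v -> M w -> tail_form w v = (tail_form v w)^*.
Proof.
move=> Mv Mw; rewrite /tail_form -csum_conj; last exact: csummable_tail.
by congr csum; apply/funext => i; rewrite rmorphM /= conjcK mulrC.
Qed.

Lemma tail_formii v : tail_form v v = (tail_sqnorm v)%:C.
Proof.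
by rewrite /tail_form -csum_real; congr csum; apply/funext => i; rewrite mulcJ.
Qed.

Lemma tail_sqnorm_ge0 v : M v -> 0 <= tail_sqnorm v.
Proof.
move=> [_ v_cvg]; apply: lim_series_ge0 (is_cvg_series_tail v_cvg) _ => i.
exact: cnorm2_ge0.
Qed.

Lemma tail_sqnorm_eq0 v : M v -> tail_sqnorm v = 0 -> forall i, v i.+1 = 0.
Proof.
move=> [_ v_cvg] tail0 i; apply: cnorm2_eq0.
by apply: lim_series_eq0 (is_cvg_series_tail v_cvg) _ tail0 i => k; exact: cnorm2_ge0.
Qed.

Lemma tail_form_CS v w : M v -> M w ->
  cnorm2 (tail_form v w) <= tail_sqnorm v * tail_sqnorm w.
Proof.
move=> Mv Mw; rewrite -[tail_sqnorm v]creR -[tail_sqnorm w]creR -!tail_formii.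
apply: (hermitian_CS (D := M)) => //; [exact: in_model_lin | exact: tail_form_linl |
  exact: tail_form_conj | by move=> u Mu; rewrite tail_formii creR tail_sqnorm_ge0].
Qed.

Lemma Bform_linl a b v w u : M v -> M w -> M u ->
  Bform (fun j => a * v j + b * w j) u = a * Bform v u + b * Bform w u.
Proof. by move=> Mv Mw Mu; rewrite !BformE tail_form_linl //; ring. Qed.

Lemma Bform_conj v w : M v -> M w -> Bform w v = (Bform v w)^*.
Proof.
move=> Mv Mw; rewrite !BformE (tail_form_conj Mv Mw) rmorphB rmorphM /= conjcK.
by rewrite mulrC.
Qed.

Lemma Bform_linr a b v w u : M v -> M w -> M u ->
  Bform u (fun j => a * v j + b * w j) = a^*%C * Bform u v + b^*%C * Bform u w.
Proof.
move=> Mv Mw Mu; rewrite (Bform_conj (in_model_lin a b Mv Mw) Mu).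
by rewrite Bform_linl // rmorphD !rmorphM /= -!Bform_conj.
Qed.

Lemma Bform_scalel a v u : M v -> M u -> Bform (fun j => a * v j) u = a * Bform v u.
Proof. by move=> Mv Mu; rewrite -scale_as_lin Bform_linl // mul0r addr0. Qed.

Lemma Bform_scaler a v u : M v -> M u -> Bform u (fun j => a * v j) = a^*%C * Bform u v.
Proof. by move=> Mv Mu; rewrite -scale_as_lin Bform_linr // rmorph0 mul0r addr0. Qed.

Lemma Bformii v : Bform v v = (cnorm2 (v 0%N) - tail_sqnorm v)%:C.
Proof. by rewrite BformE tail_formii mulcJ rmorphB. Qed.

Lemma Bform_real v : Bform v v = (cre (Bform v v))%:C.
Proof. by rewrite Bformii. Qed.

Let orth_head_tail p v : M p -> M v -> Bform v p = 0 ->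
  cnorm2 (v 0%N) * cnorm2 (p 0%N) <= tail_sqnorm v * tail_sqnorm p.
Proof.
move=> Mp Mv orth; have := tail_form_CS Mv Mp.
suff -> : tail_form v p = v 0%N * (p 0%N)^* by rewrite cnorm2M cnorm2J.
by apply/eqP; rewrite eq_sym -subr_eq0 -BformE orth.
Qed.

Lemma Bform_orth_le0 p v : in_Hm m p -> M v -> Bform v p = 0 -> cre (Bform v v) <= 0.
Proof.
move=> [Mp p_pos] Mv orth; have := orth_head_tail Mp Mv orth.
move: p_pos; rewrite !Bformii !creR.
have := tail_sqnorm_ge0 Mv; have := tail_sqnorm_ge0 Mp; have := cnorm2_ge0 (p 0%N).
nra.
Qed.

Lemma Bform_orth_eq0 p v : in_Hm m p -> M v -> Bform v p = 0 -> 0 <= cre (Bform v v) ->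
  forall i, v i = 0.
Proof.
move=> Hp Mv orth v_ge0; have v_le0 := Bform_orth_le0 Hp Mv orth.
have [Mp p_pos] := Hp; have := orth_head_tail Mp Mv orth.
move: p_pos v_ge0 v_le0; rewrite !Bformii !creR.
have := tail_sqnorm_ge0 Mv; have := tail_sqnorm_ge0 Mp; have := cnorm2_ge0 (v 0%N).
move=> v0_ge0 tailp_ge0 tailv_ge0 p_pos v_ge0 v_le0 CS.
have head0 : cnorm2 (v 0%N) = 0 by nra.
have tail0 : tail_sqnorm v = 0 by lra.
by case=> [|i]; [exact: cnorm2_eq0 | exact: tail_sqnorm_eq0 Mv tail0 i].
Qed.

Lemma Bform_boundary_neq0 p y : in_Hm m p -> in_boundary m y -> Bform y p != 0.
Proof.
move=> Hp [My [[i yi_neq0] y_iso]]; apply/eqP => orth.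
by move: yi_neq0; rewrite (Bform_orth_eq0 Hp My orth) ?y_iso ?eqxx.
Qed.

Lemma Bform_orth_CS p v w : in_Hm m p -> M v -> M w -> Bform v p = 0 -> Bform w p = 0 ->
  cnorm2 (Bform v w) <= cre (Bform v v) * cre (Bform w w).
Proof.
move=> Hp Mv Mw v_orth w_orth; have [Mp _] := Hp.
pose D u := M u /\ Bform u p = 0.
have D_lin (a1 a2 : R[i]) v' w' : D v' -> D w' -> D (fun j => a1 * v' j + a2 * w' j).
  move=> [Mv' v'_orth] [Mw' w'_orth]; split; first exact: in_model_lin.
  by rewrite Bform_linl // v'_orth w'_orth !mulr0 addr0.
have F_linl (a1 a2 : R[i]) v' w' u : D v' -> D w' -> D u ->
    - Bform (fun j => a1 * v' j + a2 * w' j) u = a1 * - Bform v' u + a2 * - Bform w' u.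
  by move=> [Mv' _] [Mw' _] [Mu _]; rewrite Bform_linl //; ring.
have F_conj v' w' : D v' -> D w' -> - Bform w' v' = (- Bform v' w')^*.
  by move=> [Mv' _] [Mw' _]; rewrite Bform_conj // rmorphN.
have F_ge0 u : D u -> 0 <= cre (- Bform u u).
  by move=> [Mu u_orth]; rewrite creN oppr_ge0 (Bform_orth_le0 Hp).
have := hermitian_CS (F := fun v w => - Bform v w) D_lin F_linl F_conj F_ge0
  (conj Mv v_orth : D v) (conj Mw w_orth : D w).
by rewrite /= cnorm2N !creN mulrNN.
Qed.

(* The projection of [v] onto the orthogonal complement of [p], scaled by [B(p,p)]. *)
Definition orth_part p v := fun j => Bform p p * v j + (- Bform v p) * p j.

Lemma in_model_orth_part p v : M p -> M v -> M (orth_part p v).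
Proof. by move=> Mp Mv; exact: in_model_lin. Qed.

Lemma Bform_orth_part_orth p v : M p -> M v -> Bform (orth_part p v) p = 0.
Proof. by move=> Mp Mv; rewrite Bform_linl //; ring. Qed.

Lemma Bform_orth_part p v w : M p -> M v -> M w ->
  Bform (orth_part p v) (orth_part p w) =
    Bform p p * (Bform p p * Bform v w - Bform v p * Bform p w).
Proof.
move=> Mp Mv Mw; have Mo := in_model_orth_part Mp Mw.
rewrite {1}/orth_part Bform_linl // /orth_part !Bform_linr //.
rewrite [Bform p w]Bform_conj // [Bform p p]Bform_real conjc_real rmorphN.
by ring.
Qed.

Let creBform_orth_partii p v : M p -> M v ->
  cre (Bform (orth_part p v) (orth_part p v)) =
    cre (Bform p p) * (cre (Bform p p) * cre (Bform v v) - cnorm2 (Bform v p)).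
Proof.
move=> Mp Mv; rewrite Bform_orth_part // [Bform p v]Bform_conj // mulcJ.
by rewrite [Bform p p]Bform_real [Bform v v]Bform_real -!rmorphM -rmorphB -rmorphM creR.
Qed.

Lemma Bform_reverse_CS p v : in_Hm m p -> M v ->
  cre (Bform p p) * cre (Bform v v) <= cnorm2 (Bform v p).
Proof.
move=> Hp Mv; have [Mp p_pos] := Hp.
have := Bform_orth_le0 Hp (in_model_orth_part Mp Mv) (Bform_orth_part_orth Mp Mv).
by rewrite creBform_orth_partii // pmulr_rle0 // subr_le0.
Qed.

Lemma Bform_gram p v w : in_Hm m p -> M v -> M w ->
  cnorm2 ((cre (Bform p p))%:C * Bform v w - Bform v p * Bform p w) <=
    (cnorm2 (Bform v p) - cre (Bform p p) * cre (Bform v v)) *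
    (cnorm2 (Bform w p) - cre (Bform p p) * cre (Bform w w)).
Proof.
move=> Hp Mv Mw; have [Mp p_pos] := Hp.
have := Bform_orth_CS Hp (in_model_orth_part Mp Mv) (in_model_orth_part Mp Mw)
  (Bform_orth_part_orth Mp Mv) (Bform_orth_part_orth Mp Mw).
rewrite Bform_orth_part // (creBform_orth_partii Mp Mv) (creBform_orth_partii Mp Mw).
rewrite [in X in cnorm2 X]Bform_real cnorm2M cnorm2R.
by move=> CS; rewrite -(ler_pM2l (exprn_gt0 2 p_pos)); lra.
Qed.

End HermitianForm.

Lemma re_conj_mul_gt0 {R : realType} (A Kv Kw : R) (s t Y : R[i]) :
  0 < A -> 0 < Kv -> 0 <= Kw -> t != 0 ->
  A * Kv <= cnorm2 s -> A * Kw <= cnorm2 t ->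
  cnorm2 (A%:C * Y - s * t^*%C) <= (cnorm2 s - A * Kv) * (cnorm2 t - A * Kw) ->
  0 < cre (s^*%C * Y * t).
Proof.
move=> A_gt0 Kv_gt0 Kw_ge0 t_neq0 s_ge t_ge gram.
set S := cnorm2 s in s_ge gram *; set T := cnorm2 t in t_ge gram *.
set Z := A%:C * Y - s * t^*%C in gram.
have T_gt0 : 0 < T := cnorm2_gt0 t_neq0.
have S_gt0 : 0 < S by apply: lt_le_trans s_ge; rewrite mulr_gt0.
have Z_lt : cnorm2 Z < S * T.
  have a_gt0 : 0 < A * Kv by rewrite mulr_gt0.
  have b_ge0 : 0 <= A * Kw by rewrite mulr_ge0 // ltW.
  move: (A * Kv) (A * Kw) a_gt0 b_ge0 s_ge t_ge gram => a b; nra.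
have W_gt : - (S * T) < cre (s^*%C * Z * t).
  have := cre_sqr_le (s^*%C * Z * t); rewrite !cnorm2M cnorm2J -/S -/T.
  have := cnorm2_ge0 Z; nra.
have key : A%:C * (s^*%C * Y * t) = s^*%C * Z * t + S%:C * T%:C.
  by rewrite /Z /S /T -!mulcJ; ring.
have := congr1 cre key; rewrite creD !creMR creR => reE.
by rewrite -(pmulr_rgt0 _ A_gt0) reE; lra.
Qed.

Section Triple.
Context {R : realType} (m : option nat).
Local Notation M := (in_model m).
Implicit Types (u v w p y : nat -> R[i]) (l : R[i]).

Definition triple u v w := Bform u v * Bform v w * Bform w u.

Lemma CartE u v w : Cart u v w = carg (triple u v w).
Proof. by []. Qed.

Lemma triple_re_gt0 p v w : in_Hm m p -> in_Hm m v -> M w -> 0 <= cre (Bform w w) ->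
  Bform w p != 0 -> 0 < cre (triple p v w).
Proof.
move=> Hp [Mv v_pos] Mw w_ge0 wp_neq0; have [Mp p_pos] := Hp.
rewrite /triple [Bform p v](Bform_conj Mv Mp).
apply: (re_conj_mul_gt0 p_pos v_pos w_ge0 wp_neq0 (Bform_reverse_CS Hp Mv) (Bform_reverse_CS Hp Mw)).
by have := Bform_gram Hp Mv Mw; rewrite [Bform p w](Bform_conj Mw Mp).
Qed.

Lemma Bform_Hm_neq0 p v : in_Hm m p -> in_Hm m v -> Bform v p != 0.
Proof.
move=> Hp [Mv v_pos]; have [_ p_pos] := Hp.
have := lt_le_trans (mulr_gt0 p_pos v_pos) (Bform_reverse_CS Hp Mv).
by apply: contraTneq => ->; rewrite /cnorm2 /= expr0n addr0 ltxx.
Qed.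

Lemma triple_conj u v w : M u -> M v -> M w -> triple v u w = (triple u v w)^*.
Proof.
move=> Mu Mv Mw; rewrite /triple !rmorphM /=.
rewrite -(Bform_conj Mu Mv) -(Bform_conj Mv Mw) -(Bform_conj Mw Mu); ring.
Qed.

Lemma triple_scale12 l1 l2 u v w : M u -> M v -> M w ->
  triple (fun j => l1 * u j) (fun j => l2 * v j) w =
    (cnorm2 l1 * cnorm2 l2)%:C * triple u v w.
Proof.
move=> Mu Mv Mw; have [Mlu Mlv] := (in_model_scale l1 Mu, in_model_scale l2 Mv).
rewrite /triple (Bform_scalel _ Mu Mlv) (Bform_scaler _ Mv Mu) (Bform_scalel _ Mv Mw).
rewrite (Bform_scaler _ Mu Mw) rmorphM /= -!mulcJ; ring.
Qed.

Lemma triple_scale3 l u v w : M u -> M v -> M w ->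
  triple u v (fun j => l * w j) = (cnorm2 l)%:C * triple u v w.
Proof.
move=> Mu Mv Mw; rewrite /triple (Bform_scaler _ Mw Mv) (Bform_scalel _ Mw Mu) -mulcJ.
by ring.
Qed.

Lemma triple_cocycle u v w y : M u -> M v -> M w -> M y ->
  triple u v y * triple v w y * triple w u y =
    (cnorm2 (Bform y u) * cnorm2 (Bform y v) * cnorm2 (Bform y w))%:C * triple u v w.
Proof.
move=> Mu Mv Mw My; rewrite /triple !rmorphM /= -!mulcJ.
by rewrite -(Bform_conj My Mu) -(Bform_conj My Mv) -(Bform_conj My Mw); ring.
Qed.

End Triple.

Section CartanBoundary.
Context {R : realType} (m : option nat) (y : nat -> R[i]).
Hypothesis y_boundary : in_boundary m y.
Implicit Types (u v w : nat -> R[i]) (l : R[i]).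

Let My : in_model m y := proj1 y_boundary.

Lemma triple_boundary_re_gt0 u v : in_Hm m u -> in_Hm m v -> 0 < cre (triple u v y).
Proof.
move=> Hu Hv; have [_ [_ y_iso]] := y_boundary.
apply: triple_re_gt0 Hu Hv My _ (Bform_boundary_neq0 Hu y_boundary).
by rewrite y_iso.
Qed.

Lemma Cart_boundary_antisym u v : in_Hm m u -> in_Hm m v -> Cart v u y = - Cart u v y.
Proof.
move=> [Mu u_pos] [Mv v_pos].
by rewrite !CartE (triple_conj Mu Mv My) carg_conj // triple_boundary_re_gt0.
Qed.

Lemma Cart_boundary_cocycle u v w : in_Hm m u -> in_Hm m v -> in_Hm m w ->
  Cart u v y + Cart v w y + Cart w u y = Cart u v w.
Proof.
move=> Hu Hv Hw; case: (Hu) (Hv) (Hw) => [Mu _] [Mv _] [Mw w_pos].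
rewrite !CartE; apply: carg_mul3 (triple_cocycle Mu Mv Mw My).
- exact: triple_boundary_re_gt0 Hu Hv.
- exact: triple_boundary_re_gt0 Hv Hw.
- exact: triple_boundary_re_gt0 Hw Hu.
- exact: triple_re_gt0 Hu Hv Mw (ltW w_pos) (Bform_Hm_neq0 Hu Hw).
- have y_neq0 z : in_Hm m z -> 0 < cnorm2 (Bform y z).
    by move=> Hz; rewrite cnorm2_gt0 // (Bform_boundary_neq0 Hz y_boundary).
  by rewrite !mulr_gt0 // y_neq0.
Qed.

Lemma Cart_boundary_isometry (T : (nat -> R[i]) -> nat -> R[i]) mu l1 l2 u v :
  (forall v, in_model m v -> in_model m (T v)) ->
  (forall v w, in_model m v -> in_model m w -> Bform (T v) (T w) = Bform v w) ->
  (forall j, T y j = mu * y j) -> cnorm2 l1 = 1 -> cnorm2 l2 = 1 ->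
  in_Hm m u -> in_Hm m v ->
  Cart (fun j => l1 * T u j) (fun j => l2 * T v j) y = Cart u v y.
Proof.
move=> TM TB Ty l1_unit l2_unit Hu Hv; case: (Hu) (Hv) => [Mu _] [Mv _].
have TH w : in_Hm m w -> in_Hm m (T w) by case=> Mw w_pos; split; [exact: TM | rewrite TB].
have triple_T : (cnorm2 mu)%:C * triple (T u) (T v) y = triple u v y.
  rewrite -(triple_scale3 mu (TM _ Mu) (TM _ Mv) My) -(funext Ty).
  by rewrite /triple !TB.
have Tpos := triple_boundary_re_gt0 (TH _ Hu) (TH _ Hv).
have mu_gt0 : 0 < cnorm2 mu.
  rewrite lt_neqAle cnorm2_ge0 andbT eq_sym; apply: contraTneq (triple_boundary_re_gt0 Hu Hv).
  by rewrite -triple_T => ->; rewrite creMR mul0r ltxx.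
rewrite !CartE (triple_scale12 l1 l2 (TM _ Mu) (TM _ Mv) My) l1_unit l2_unit mulr1 mul1r.
by rewrite -triple_T (carg_scale mu_gt0 Tpos).
Qed.

End CartanBoundary.

Theorem mainTheorem6 (R : realType) (G : topologicalType)
    (mul : G -> G -> G) (inv : G -> G) (one : G)
    (HG : is_topological_group mul inv one)
    (m : option nat) (rho : G -> (nat -> R[i]) -> (nat -> R[i]))
    (Hrho : is_representation mul m rho)
    (x : nat -> R[i]) (Hx : in_Hm m x) :
  (exists y : nat -> R[i], in_boundary m y /\ forall g : G, fixes_point (rho g) y) ->
  exists omega : G -> G -> R,
    (forall g l : G, omega l g = - omega g l) /\
    (forall h g l : G, omega (mul h g) (mul h l) = omega g l) /\
    (forall g l k : G,
       omega l k - omega g k + omega g l = Cart (rho g x) (rho l x) (rho k x)).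
Proof.
move=> [y [Hy y_fixed]]; have [rho_U [rho_hom _]] := Hrho; have [Mx x_pos] := Hx.
have rhoM g : forall v, in_model m v -> in_model m (rho g v) by case: (rho_U g).
have rhoB g : forall v w, in_model m v -> in_model m w -> Bform (rho g v) (rho g w) = Bform v w.
  by have [_ [_ [rhoB _]]] := rho_U g.
have rhoH g : in_Hm m (rho g x) by split; [exact: rhoM | rewrite rhoB].
exists (fun g l => Cart (rho g x) (rho l x) y); split; [|split].
- by move=> g l /=; rewrite (Cart_boundary_antisym Hy (rhoH g) (rhoH l)).
- move=> h g l /=; have [[l1 l1_unit E1] [l2 l2_unit E2]] := (rho_hom h g, rho_hom h l).
  have [mu rho_y] := y_fixed h.
  rewrite (funext (E1 x Mx)) (funext (E2 x Mx)).
  exact: Cart_boundary_isometry (rhoM h) (rhoB h) rho_y l1_unit l2_unit (rhoH g) (rhoH l).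
- move=> g l k /=; rewrite -(Cart_boundary_cocycle Hy (rhoH g) (rhoH l) (rhoH k)).
  by rewrite (Cart_boundary_antisym Hy (rhoH g) (rhoH k)); lra.
Qed.
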